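(* Let $D$ be a strong asymmetrical digraph with $D\in\mathcal{LE}_3$. Then $\chi_o(D)\leq 6$.
   Context: All digraphs are finite, without loops or multiple arcs. A digraph is asymmetrical if it has no pair of opposite arcs $(u,v),(v,u)$. For an asymmetrical digraph $D$, an oriented $k$-colouring is a proper colouring $V(D)\to\{1,\ldots,k\}$ (vertices joined by an arc get distinct colours) such that all arcs between any two colour classes have the same direction; the oriented chromatic number $\chi_o(D)$ is the least such $k$, equivalently the least order of a tournament $T$ admitting a homomorphism (arc-preserving vertex map) from $D$ to $T$. Paths and cycles are directed; the length of a path or cycle is its number of arcs. A digraph is strong if for every ordered pair of vertices $x,y$ there is a directed path from $x$ to $y$. For a subdigraph $H$ of a digraph $D$, an ear of $H$ in $D$ is either a directed path in $D$ whose two end vertices lie in $H$ and whose internal vertices do not lie in $H$, or a directed cycle in $D$ having exactly one vertex in $H$. An ear decomposition of a strong digraph $D$ is a sequence $(D_0,D_1,\ldots,D_k)$ of strong subdigraphs of $D$ such that $D_0$ is a directed cycle, $D_{j+1}=D_j\cup P_j$ where $P_j$ is an ear of $D_j$ in $D$ for every $j\in\{0,\ldots,k-1\}$, and $D_k=D$. For an integer $i\geq 1$, $\mathcal{LE}_i$ denotes the family of strong digraphs having an ear decomposition in which every ear has length at least $i$. *)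

From mathcomp Require Import all_boot.
Set Implicit Arguments. Unset Strict Implicit. Unset Printing Implicit Defensive.

Section Digraphs.
Variable V : finType.
Variable e : rel V.

Definition loopless := irreflexive e.
Definition asymmetrical := forall u v, e u v -> ~~ e v u.
Definition strong := forall x y : V, connect e x y.

Definition oriented_colouring (k : nat) (c : V -> 'I_k) :=
  (forall u v, e u v -> c u != c v) /\
  (forall u v x y, e u v -> e x y -> c u = c y -> c v = c x -> False).

Definition oriented_chromatic_le (k : nat) :=
  exists c : V -> 'I_k, oriented_colouring c.

(* A directed path given by its vertex sequence x0 .. xm (m >= 1),
   distinct vertices; its length is size p - 1. *)
Definition dipath (p : seq V) : bool :=
  if p is x :: s then [&& uniq p, path e x s & 0 < size s] else false.
Definition path_arcs (p : seq V) : seq (V * V) := zip p (behead p).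

(* A directed cycle given by its vertex sequence x0 .. x_{m-1} (m >= 2),
   distinct vertices, arcs x_i -> x_{i+1} and x_{m-1} -> x0; length m. *)
Definition dicycle (p : seq V) : bool :=
  if p is x :: s then [&& uniq p, cycle e p & 0 < size s] else false.
Definition cycle_arcs (p : seq V) : seq (V * V) := zip p (rot 1 p).

Definition subdigraph := ({set V} * {set V * V})%type.

Definition full_digraph : subdigraph := ([set: V], [set a | e a.1 a.2]).

Definition strong_sub (H : subdigraph) : bool :=
  [forall x in H.1, forall y in H.1,
     connect (fun a b => (a, b) \in H.2) x y].

(* An ear of H: (p, true) is a directed cycle p with exactly one vertex in H;
   (p, false) is a directed path p whose two end vertices lie in H and whose
   internal vertices do not lie in H. *)
Definition ear_of (H : subdigraph) (P : seq V * bool) : bool :=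
  if P.2 then dicycle P.1 && (#|[set x in P.1 | x \in H.1]| == 1)
  else match P.1 with
       | x :: s => [&& dipath (x :: s), x \in H.1, last x s \in H.1 &
                      all (fun y => y \notin H.1) (behead (belast x s))]
       | [::] => false
       end.

Definition ear_length (P : seq V * bool) : nat :=
  if P.2 then size P.1 else (size P.1).-1.

Definition ear_arcs (P : seq V * bool) : seq (V * V) :=
  if P.2 then cycle_arcs P.1 else path_arcs P.1.

Definition add_ear (H : subdigraph) (P : seq V * bool) : subdigraph :=
  (H.1 :|: [set x in P.1], H.2 :|: [set a in ear_arcs P]).

(* The remaining part of an ear decomposition starting from D_j = H with
   ears Ps = P_j, ..., P_{k-1}: each P is an ear of the current subdigraph
   of length >= i, each D_{j+1} is strong, and D_k = D. *)
Fixpoint ear_seq_ok (i : nat) (H : subdigraph) (Ps : seq (seq V * bool)) : bool :=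
  match Ps with
  | [::] => H == full_digraph
  | P :: Ps' => [&& ear_of H P, i <= ear_length P, strong_sub (add_ear H P)
                  & ear_seq_ok i (add_ear H P) Ps']
  end.

Definition cycle_subdigraph (c : seq V) : subdigraph :=
  ([set x in c], [set a in cycle_arcs c]).

Definition in_LE (i : nat) : Prop :=
  exists (c : seq V) (Ps : seq (seq V * bool)),
    [&& dicycle c, strong_sub (cycle_subdigraph c) & ear_seq_ok i (cycle_subdigraph c) Ps].

End Digraphs.

From mathcomp Require Import all_boot.
Set Implicit Arguments. Unset Strict Implicit. Unset Printing Implicit Defensive.

(* A homomorphism of D into a tournament T is an oriented colouring, so it
   suffices to map D into a suitable 6-vertex tournament. Take T such that any
   two (possibly equal) vertices are joined by a directed walk of length
   exactly 3, hence of every length >= 3. Then a homomorphism of D_j into T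
   extends to D_j + P for every ear P of length >= 3: the end vertices of P
   (or its single vertex in D_j, for a cycle) are already coloured, and the
   internal vertices, which are new, are coloured along a walk of T of
   length |P| between the prescribed end colours. The initial cycle is such
   an ear of a single vertex, and has length >= 3 because D is asymmetrical. *)

Lemma mem_zip (T1 T2 : eqType) (s : seq T1) (t : seq T2) a b :
  (a, b) \in zip s t -> (a \in s) && (b \in t).
Proof.
elim: s t => [|x s IH] [|y t] //= /[1!inE] /orP [/eqP [-> ->]|/IH].
  by rewrite !inE !eqxx.
by case/andP=> sa tb; rewrite !inE sa tb !orbT.
Qed.

Section ArcLists.
Variables (V : finType) (r : rel V).

Lemma all_path_arcs x s :
  all [pred a | r a.1 a.2] (path_arcs (x :: s)) = path r x s.
Proof. by elim: s x => //= y s IH x; rewrite IH. Qed.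

Lemma all_cycle_arcs p : all [pred a | r a.1 a.2] (cycle_arcs p) = cycle r p.
Proof.
case: p => // x s; rewrite /cycle_arcs rot1_cons /=.
by elim: s {1 3}x => [|y s IH] w //=; rewrite IH.
Qed.

Lemma ear_arcs_inside (P : seq V * bool) a :
  a \in ear_arcs P -> (a.1 \in P.1) && (a.2 \in P.1).
Proof.
case: P a => p [] [a1 a2] /mem_zip /andP [a1p a2p] /=; rewrite a1p //.
  by rewrite -(mem_rot 1).
by case: p a1p a2p => //= x s _ a2s; rewrite inE a2s orbT.
Qed.

Lemma dicycle_uniq p : dicycle r p -> uniq p.
Proof. by case: p => // x s /andP []. Qed.

Lemma dicycle_size_gt2 p : asymmetrical r -> dicycle r p -> 2 < size p.
Proof.
case: p => [|x [|y [|z s]]] // r_asym; first by case/and3P.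
case/and3P=> _ /and3P [xy yx _] _.
by move: (r_asym _ _ xy); rewrite yx.
Qed.

End ArcLists.

Lemma recolour_on_seq (V : eqType) (U : Type) (c : V -> U) t (q : seq U) :
  uniq t -> size q = size t ->
  exists c' : V -> U, {in [predC t], c' =1 c} /\ map c' t = q.
Proof.
move=> t_uniq size_q; exists (fun v => nth (c v) q (index v t)); split.
  by move=> v vNt; rewrite nth_default // size_q memNindex.
elim: t q t_uniq size_q => [|x t IH] [|y q] //= /andP [xNt t_uniq] [size_q].
rewrite eqxx; congr (_ :: _); rewrite -[RHS](IH q) //.
apply/eq_in_map => v vt /=.
by have -> : (x == v) = false by apply: contraNF xNt => /eqP ->.
Qed.

Section LongWalks.
Variables (U : Type) (T : rel U).

Definition long_walks (n : nat) :=
  forall a b l, n <= l -> exists p, [/\ size p = l, path T a p & last a p = b].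

Lemma long_walks_of_exact n :
  0 < n -> (forall a b, exists p, [/\ size p = n, path T a p & last a p = b]) ->
  long_walks n.
Proof.
move=> n_gt0 walk_n a b l /subnKC <-; elim: (l - n) a => [|k IH] a.
  by rewrite addn0; apply: walk_n.
have [[|a' p] [size_p]] := walk_n a a; first by rewrite -size_p in n_gt0.
rewrite /= => /andP [aa' _] _.
have [p' [size_p' path_p' last_p']] := IH a'.
by exists (a' :: p'); rewrite /= addnS size_p' aa' path_p'.
Qed.

End LongWalks.

Section EarExtension.
Variables (V : finType) (e : rel V) (U : Type) (T : rel U) (n : nat).
Hypothesis T_walks : long_walks T n.

Definition arcs_inside (H : subdigraph V) :=
  {in H.2, forall a, (a.1 \in H.1) && (a.2 \in H.1)}.

Definition hom_on (H : subdigraph V) :=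
  exists c : V -> U, {in H.2, forall a, T (c a.1) (c a.2)}.

Lemma arcs_inside_add_ear H P : arcs_inside H -> arcs_inside (add_ear H P).
Proof.
move=> H_inside a; rewrite !inE => /orP [/H_inside/andP [-> ->] //|].
by case/ear_arcs_inside/andP => -> ->; rewrite !orbT.
Qed.

Lemma extend_hom_along (H1 : {set V}) (c : V -> U) x y t :
  x \in H1 -> y \in H1 -> uniq t -> {in t, forall v, v \notin H1} ->
  n <= (size t).+1 ->
  exists c', {in H1, c' =1 c} /\ path (relpre c' T) x (rcons t y).
Proof.
move=> xH yH t_uniq t_out n_le.
have [p [size_p path_p last_p]] := T_walks (c x) (c y) n_le.
case/lastP: p size_p path_p last_p => [//|w d].
rewrite size_rcons last_rcons => -[size_w] path_w d_cy.
have [c' [c'E map_c']] := recolour_on_seq c t_uniq size_w.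
have c'H : {in H1, c' =1 c}.
  by move=> v vH; apply: c'E; apply: contraL vH; apply: t_out.
exists c'; split=> //.
by rewrite -path_map map_rcons map_c' !c'H // -d_cy.
Qed.

Lemma extend_hom_along_ear H (c : V -> U) P :
  ear_of e H P -> n <= ear_length P ->
  exists c', {in H.1, c' =1 c} /\ all [pred a | T (c' a.1) (c' a.2)] (ear_arcs P).
Proof.
case: P => p [] /=; rewrite /ear_of /ear_length /ear_arcs /=.
- case/andP=> dicycle_p /cards1P [h Hh] size_p.
  have : h \in [set x in p | x \in H.1] by rewrite Hh set11.
  rewrite inE => /andP [hp hH].
  have others v : v \in p -> v != h -> v \notin H.1.
    by move=> vp; apply: contra => vH; rewrite -in_set1 -Hh inE vp.
  have [i t rot_p] := rot_to hp.
  have /andP [hNt t_uniq] : uniq (h :: t).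
    by rewrite -rot_p rot_uniq; apply: dicycle_uniq dicycle_p.
  have t_out : {in t, forall v, v \notin H.1}.
    move=> v vt; apply: others; last by apply: contraNneq hNt => <-.
    by rewrite -(mem_rot i) rot_p inE vt orbT.
  rewrite -(size_rot i) rot_p in size_p.
  have [c' [c'H path_c']] := extend_hom_along c hH hH t_uniq t_out size_p.
  by exists c'; rewrite (all_cycle_arcs (relpre c' T)) -(rot_cycle i) rot_p.
- case: p => [|x s] // /and4P [/and3P [xs_uniq _ s_gt0] xH + t_out].
  case/lastP: s xs_uniq s_gt0 t_out => [|t y] //.
  rewrite last_rcons belast_rcons /= rcons_uniq size_rcons.
  move=> /and3P [_ _ t_uniq] _ /allP t_out yH size_p.
  have [c' [c'H path_c']] := extend_hom_along c xH yH t_uniq t_out size_p.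
  by exists c'; rewrite (all_path_arcs (relpre c' T)).
Qed.

Lemma hom_on_add_ear H P :
  arcs_inside H -> ear_of e H P -> n <= ear_length P -> hom_on H ->
  hom_on (add_ear H P).
Proof.
move=> H_inside ear_P size_P [c c_hom].
have [c' [c'H /allP c'_ear]] := extend_hom_along_ear c ear_P size_P.
exists c' => a; rewrite !inE => /orP [aH|]; last exact: c'_ear.
by case/andP: (H_inside a aH) => a1H a2H; rewrite !c'H //; apply: c_hom.
Qed.

Lemma hom_on_ear_seq H Ps :
  arcs_inside H -> hom_on H -> ear_seq_ok e n H Ps -> hom_on (full_digraph e).
Proof.
elim: Ps H => [|P Ps IH] H H_inside H_hom /=; first by move/eqP <-.
case/and4P=> ear_P size_P _ Ps_ok; apply: IH Ps_ok.
  exact: arcs_inside_add_ear.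
exact: hom_on_add_ear.
Qed.

Lemma hom_on_cycle (a : U) p :
  dicycle e p -> n <= size p -> hom_on (cycle_subdigraph p).
Proof.
case: p => // x s dicycle_p size_p.
have ear_p : ear_of e ([set x], set0) (x :: s, true).
  apply/andP; split=> //; apply/cards1P; exists x.
  by apply/setP => y; rewrite !inE andbC; case: eqP => // ->; rewrite mem_head.
have [c [_ /allP c_hom]] := extend_hom_along_ear (fun=> a) ear_p size_p.
by exists c => b; rewrite inE; apply: c_hom.
Qed.

Lemma hom_of_LE (a : U) :
  (forall p, dicycle e p -> n <= size p) -> in_LE e n ->
  exists c : V -> U, {homo c : u v / e u v >-> T u v}.
Proof.
move=> cycles_long [p [Ps /and3P [dicycle_p _ Ps_ok]]].
have p_inside : arcs_inside (cycle_subdigraph p).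
  by move=> b; rewrite !inE => /(@ear_arcs_inside _ (p, true)).
have p_hom := hom_on_cycle a dicycle_p (cycles_long p dicycle_p).
have [c c_hom] := hom_on_ear_seq p_inside p_hom Ps_ok.
by exists c => u v uv; apply: (c_hom (u, v)); rewrite inE.
Qed.

End EarExtension.

Lemma oriented_colouring_of_hom (V : finType) (e : rel V) k (T : rel 'I_k)
    (c : V -> 'I_k) :
  (forall i j, T i j -> ~~ T j i) -> {homo c : u v / e u v >-> T u v} ->
  oriented_colouring e c.
Proof.
move=> T_asym c_hom; split.
  move=> u v /c_hom cuv; apply/eqP => cu_cv; rewrite cu_cv in cuv.
  by move: (T_asym _ _ cuv); rewrite cuv.
move=> u v x y /c_hom Tuv /c_hom Txy cuy cvx; rewrite cuy cvx in Tuv.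
by move: (T_asym _ _ Txy); rewrite Tuv.
Qed.

Lemma all_iota_ord n (P : pred nat) : all P (iota 0 n) -> forall i : 'I_n, P i.
Proof. by move=> /allP P_all i; apply: P_all; rewrite mem_iota add0n ltn_ord. Qed.

Lemma has_iota_ord n (P : pred nat) : has P (iota 0 n) -> exists i : 'I_n, P i.
Proof.
case/hasP=> i; rewrite mem_iota add0n => /andP [_ lt_i_n] Pi.
by exists (Ordinal lt_i_n).
Qed.

(* The Paley tournament on Z/7 (i -> i + r for r a nonzero square mod 7),
   restricted to the vertices 0, ..., 5. *)
Definition paley7 (i j : nat) : bool := (j + 7 - i) %% 7 \in [:: 1; 2; 4].

Definition paley6 : rel 'I_6 := fun i j => paley7 i j.

Lemma paley6_asym i j : paley6 i j -> ~~ paley6 j i.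
Proof.
have table : all (fun i => all (fun j => paley7 i j ==> ~~ paley7 j i)
                                (iota 0 6)) (iota 0 6) by vm_compute.
exact/implyP/(all_iota_ord (all_iota_ord table i)).
Qed.

Lemma paley6_long_walks : long_walks paley6 3.
Proof.
apply: long_walks_of_exact => // a b.
have table : all (fun i => all (fun j => has (fun x => has (fun y =>
    [&& paley7 i x, paley7 x y & paley7 y j]) (iota 0 6)) (iota 0 6))
    (iota 0 6)) (iota 0 6) by vm_compute.
have [x /has_iota_ord [y /and3P [ax xy yb]]] :=
  has_iota_ord (all_iota_ord (all_iota_ord table a) b).
by exists [:: x; y; b]; split=> //; apply/and4P.
Qed.

Theorem mainTheorem18 (V : finType) (e : rel V) :
  loopless e -> asymmetrical e -> strong e -> in_LE e 3 ->
  oriented_chromatic_le e 6.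
Proof.
move=> _ e_asym _ e_LE3.
have cycles_long p : dicycle e p -> 3 <= size p by apply: dicycle_size_gt2.
have [c c_hom] := hom_of_LE paley6_long_walks ord0 cycles_long e_LE3.
by exists c; apply: oriented_colouring_of_hom paley6_asym c_hom.
Qed.
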